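(* Let $\Delta\subset\mathbb{S}^2$ be a planar flag complex satisfying the Standing Assumptions, and let $T$ be a finite tree encoding the structure of $\Delta$ in the following sense: (1) each vertex $v$ of $T$ is associated to a prime full subcomplex $\Delta_v$ of $\Delta$, with $\Delta_v\neq\Delta_{v'}$ for $v\neq v'$ and $\bigcup_{v}\Delta_v=\Delta$; (2) each edge $e$ of $T$ is associated to an induced 4-cycle $\Delta_e$ of $\Delta$, with $\Delta_e\neq\Delta_{e'}$ for $e\neq e'$; (3) vertices $v_1,v_2$ are the endpoints of an edge $e$ iff $\Delta_{v_1}\cap\Delta_{v_2}=\Delta_e$, and if $V_1,V_2$ are the vertex sets of the two components of $T$ minus the midpoint of $e$, then $(\bigcup_{v\in V_1}\Delta_v,\bigcup_{v\in V_2}\Delta_v)$ is a strong visual decomposition of $\Delta$ along $\Delta_e$. Then for each region $R$ of $\mathbb{S}^2-\Delta$ there is a vertex $v$ of $T$ such that $R$ is also a region of $\mathbb{S}^2-\Delta_v$.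
   Context: A flag complex is a simplicial complex in which every complete subgraph of the 1-skeleton spans a simplex; a subcomplex is full if it contains every simplex whose vertices lie in it. Standing Assumptions on $\Delta\subset\mathbb{S}^2$: (1) connected, no separating vertex, no separating edge, contains an induced 4-cycle; (2) not a 4-cycle and not a cone on a 4-cycle. An induced 4-cycle $\sigma$ strongly separates $\Delta$ if $\Delta$ meets both components $U_1,U_2$ of $\mathbb{S}^2-\sigma$; then with $\Delta_i$ equal to $\sigma$ together with the components of $\Delta-\sigma$ in $U_i$, the pair $(\Delta_1,\Delta_2)$ is the strong visual decomposition along $\sigma$. $\Delta$ is prime if it is connected with no separating vertex or edge, is not a 4-cycle but contains an induced 4-cycle, and has no strongly separating induced 4-cycle. A region of $\mathbb{S}^2-\Delta$ is a connected component. *)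

From mathcomp Require Import all_boot all_algebra.

Set Implicit Arguments.
Unset Strict Implicit.
Unset Printing Implicit Defensive.

Local Open Scope ring_scope.

Section Complexes.
Variable n : nat.
Implicit Types (K L C : {set {set 'I_n}}) (W : {set 'I_n}).

Definition simplicial_complex K : Prop :=
  forall s, s \in K -> s != set0 /\
    (forall t : {set 'I_n}, t \subset s -> t != set0 -> t \in K).

Definition verts K : {set 'I_n} := [set v | [set v] \in K].

Definition edge K : rel 'I_n := fun u v => (u != v) && ([set u; v] \in K).

Definition flag K : Prop :=
  forall s : {set 'I_n}, s != set0 -> s \subset verts K ->
    (forall u v, u \in s -> v \in s -> u != v -> [set u; v] \in K) -> s \in K.

Definition subcomplex L K : Prop := simplicial_complex L /\ L \subset K.

Definition full L K : Prop :=
  subcomplex L K /\ forall s, s \in K -> s \subset verts L -> s \in L.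

Definition full_sub K W : {set {set 'I_n}} := [set s in K | s \subset W].

Definition connectedC K : Prop :=
  verts K != set0 /\
  forall u v, u \in verts K -> v \in verts K -> connect (edge K) u v.

Definition disconnectedC K : Prop :=
  exists u v, [/\ u \in verts K, v \in verts K & ~~ connect (edge K) u v].

Definition separating_vertex K : Prop :=
  exists v, v \in verts K /\ disconnectedC (full_sub K (verts K :\ v)).

Definition separating_edge K : Prop :=
  exists u v, edge K u v /\ disconnectedC (full_sub K (verts K :\: [set u; v])).

Definition induced_4cycle K C : Prop :=
  exists a b c d : 'I_n,
    [/\ uniq [:: a; b; c; d], C = full_sub K [set a; b; c; d],
        [&& edge K a b, edge K b c, edge K c d & edge K d a]
      & ~~ edge K a c && ~~ edge K b d].

Definition is_4cycle K : Prop := induced_4cycle K K.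

(* K is a cone on a 4-cycle (for flag K) *)
Definition cone_on_4cycle K : Prop :=
  exists x C, [/\ induced_4cycle K C, x \in verts K, x \notin verts C,
                  verts K = x |: verts C
                & forall y, y \in verts C -> edge K x y].
End Complexes.

From mathcomp Require Import all_classical all_reals all_analysis.
Import numFieldNormedType.Exports.

Section Geometry.
Local Open Scope classical_set_scope.
Variables (R : realType) (n : nat).
Implicit Types (K L C : {set {set 'I_n}}).

(* points of |K| in barycentric coordinates *)
Definition realization K : set 'rV[R]_n :=
  [set x | (forall i, 0 <= x ord0 i) /\ \sum_i x ord0 i = 1 /\
           finset (fun i => x ord0 i != 0) \in K].

Definition vtx (v : 'I_n) : 'rV[R]_n := \row_i (i == v)%:R.

Definition sphere2 : set 'rV[R]_3 := [set p | \sum_i (p ord0 i) ^+ 2 = 1].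

(* a topological embedding of |K| into S^2 (|K| is compact, so a continuous
   injection is a homeomorphism onto its image) *)
Definition embedding (f : 'rV[R]_n -> 'rV[R]_3) K : Prop :=
  [/\ {within realization K, continuous f},
      (forall x y, realization K x -> realization K y -> f x = f y -> x = y)
    & f @` realization K `<=` sphere2].

Definition img (f : 'rV[R]_n -> 'rV[R]_3) K : set 'rV[R]_3 :=
  f @` realization K.

Definition region (X U : set 'rV[R]_3) : Prop :=
  exists2 p, (sphere2 `\` X) p & U = connected_component (sphere2 `\` X) p.

Definition strong_visual_decomposition (f : 'rV[R]_n -> 'rV[R]_3)
    K C K1 K2 : Prop :=
  induced_4cycle K C /\
  exists U1 U2 : set 'rV[R]_3,
    [/\ region (img f C) U1, region (img f C) U2, U1 <> U2
       & sphere2 `\` img f C `<=` U1 `|` U2] /\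
    [/\ U1 `&` img f K !=set0, U2 `&` img f K !=set0,
        K1 = full_sub K (verts C :|: [set v in verts K | `[< U1 (f (vtx v)) >]])
      & K2 = full_sub K (verts C :|: [set v in verts K | `[< U2 (f (vtx v)) >]])].

Definition strongly_separates (f : 'rV[R]_n -> 'rV[R]_3) K C : Prop :=
  exists K1 K2, strong_visual_decomposition f K C K1 K2.

Definition prime_complex (f : 'rV[R]_n -> 'rV[R]_3) K : Prop :=
  [/\ connectedC K, ~ separating_vertex K, ~ separating_edge K,
      ~ is_4cycle K & (exists C, induced_4cycle K C)] /\
    ~ (exists C, induced_4cycle K C /\ strongly_separates f K C).

Definition standing_assumptions K : Prop :=
  [/\ connectedC K, ~ separating_vertex K, ~ separating_edge K,
      (exists C, induced_4cycle K C) & ~ is_4cycle K] /\ ~ cone_on_4cycle K.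
End Geometry.

Section Trees.
Variables (VT ET : finType) (ends : ET -> VT * VT).

Definition endpoints (e : ET) (u w : VT) : bool :=
  (ends e == (u, w)) || (ends e == (w, u)).

Definition tadj : rel VT := fun u w => [exists e, endpoints e u w].

Definition is_tree : Prop :=
  #|ET|.+1 = #|VT| /\ forall u w, connect tadj u w.

Definition tadj_without (e : ET) : rel VT :=
  fun u w => [exists e', (e' != e) && endpoints e' u w].

(* vertex set of the component of T minus the midpoint of e containing u *)
Definition side (e : ET) (u : VT) : {set VT} :=
  [set w | connect (tadj_without e) u w].
End Trees.

(* Let p be a point of the region.  Each edge e of T is oriented towards the
   side whose complex lies, off the 4-cycle Delta_e, in the region of
   S^2 - Delta_e not containing p.  T has one more vertex than edges, so some
   vertex v is the head of no edge.  A simplex of Delta outside Delta_v lies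
   beyond some edge e at v, and any point of it is joined to a vertex off
   Delta_e by a segment inside the open star of that vertex, hence inside
   S^2 - Delta_e; so it lies in the region of S^2 - Delta_e away from p, not in
   the component of S^2 - Delta_v containing p.  That component thus misses
   Delta and equals the region. *)

From mathcomp Require Import all_boot all_algebra.
From mathcomp Require Import all_classical all_reals all_analysis.
From mathcomp Require Import ring lra.
Import numFieldNormedType.Exports.
Import order.Order.TTheory GRing.Theory Num.Theory.

Set Implicit Arguments.
Unset Strict Implicit.
Unset Printing Implicit Defensive.

Section FullSubcomplexes.
Variables (n : nat) (K : {set {set 'I_n}}).
Hypothesis hK : simplicial_complex K.

Lemma full_sub_full (W : {set 'I_n}) : full (full_sub K W) K.
Proof.
have subK : full_sub K W \subset K.
  by apply/fintype.subsetP => s; rewrite inE => /andP[].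
split; first split=> // s.
  rewrite inE => /andP[sK sW]; have [s0 sub_s] := hK sK; split=> // t ts t0.
  by rewrite inE sub_s //= (fintype.subset_trans ts sW).
move=> s sK /fintype.subsetP sV; rewrite inE sK; apply/fintype.subsetP => v /sV.
by rewrite !inE finset.sub1set => /andP[].
Qed.

Lemma induced_4cycle_full C : induced_4cycle K C -> full C K.
Proof. by case=> [a [b [c [d [_ -> _ _]]]]]; apply: full_sub_full. Qed.

End FullSubcomplexes.

Section Realization.
Local Open Scope ring_scope.
Local Open Scope classical_set_scope.
Variables (R : realType) (n : nat).
Implicit Types (K C D : {set {set 'I_n}}) (x : 'rV[R]_n).

Definition supp x : {set 'I_n} := [set i | x ord0 i != 0].

Lemma realizationS C D : C \subset D -> realization C `<=` @realization R n D.
Proof. by move=> CD x [x0 [x1 /(fintype.subsetP CD) xD]]. Qed.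

Lemma imgS (f : 'rV[R]_n -> 'rV[R]_3) C D : C \subset D -> img f C `<=` img f D.
Proof. by move=> CD _ [x xC <-]; exists x => //; apply: realizationS xC. Qed.

Lemma realization_supp K x : realization K x -> supp x \in K.
Proof. by case=> _ []. Qed.

Lemma vertex_segment K x u t : simplicial_complex K -> realization K x ->
    u \in supp x -> 0 <= t <= 1 ->
  let z := x + t *: (vtx R u - x) in realization K z /\ u \in supp z.
Proof.
move=> hK [x0 [x1 xK]] ux /andP[t0 t1] z.
have zE i : z ord0 i = (1 - t) * x ord0 i + t * (i == u)%:R.
  by rewrite !mxE; ring.
have xu : 0 < x ord0 u by move: ux; rewrite inE lt_def x0 andbT.
have uz : u \in supp z.
  rewrite inE zE eqxx mulr1; apply/lt0r_neq0.
  have [->|t_neq0] := eqVneq t 0; first by rewrite subr0 mul1r addr0.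
  have : 0 < t by rewrite lt_def t_neq0.
  have : 0 <= (1 - t) * x ord0 u by rewrite mulr_ge0 ?subr_ge0 ?x0.
  lra.
have zx : supp z \subset supp x.
  apply/fintype.subsetP => i; rewrite !inE zE.
  have [->|iu] := eqVneq i u; first by move=> _; apply: lt0r_neq0.
  by rewrite mulr0 addr0; apply: contra => /eqP ->; rewrite mulr0.
split=> //; split.
  by move=> i; rewrite zE addr_ge0 ?mulr_ge0 ?subr_ge0.
split.
  under eq_bigr do rewrite zE.
  rewrite big_split /= -!mulr_sumr x1 (bigD1 u) //= eqxx.
  rewrite big1 => [|i /negbTE -> //].
  by rewrite addr0 /=; ring.
have [_ sub_x] := hK _ xK; apply: sub_x zx _.
by apply/set0Pn; exists u.
Qed.

End Realization.

Section Components.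
Local Open Scope classical_set_scope.
Variable T : topologicalType.
Implicit Types (A B : set T) (x : T).

Lemma connected_componentS A B x :
  A `<=` B -> connected_component A x `<=` connected_component B x.
Proof.
by move=> AB y [C [Cx CA Cc] Cy]; exists C => //; split=> //; apply: subset_trans AB.
Qed.

Lemma connected_component_subE A B x : B `<=` A ->
  connected_component A x `<=` B -> connected_component A x = connected_component B x.
Proof.
move=> BA AxB; apply/seteqP; split; last exact: connected_componentS.
have [Ax|nAx] := pselect (A x); last by rewrite connected_component_out.
apply: connected_component_max (connected_component_refl Ax) AxB _.
exact: component_connected.
Qed.

End Components.

Section Embedding.
Local Open Scope ring_scope.
Local Open Scope classical_set_scope.
Variables (R : realType) (n : nat) (K : {set {set 'I_n}}).
Variable f : 'rV[R]_n -> 'rV[R]_3.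
Hypotheses (hK : simplicial_complex K) (hf : embedding f K).

Lemma regionE (X U : set 'rV[R]_3) q :
  region X U -> U q -> U = connected_component (@sphere2 R `\` X) q.
Proof. by case=> p _ -> /same_connected_component. Qed.

Lemma img_supp_notin (C : {set {set 'I_n}}) y u :
    subcomplex C K -> realization K y -> u \in supp y -> u \notin verts C ->
  ~ img f C (f y).
Proof.
move=> [hC CK] yK uy uC [c cC fcy].
have [_ finj _] := hf.
have c_eq_y := finj _ _ (realizationS CK cC) yK fcy; subst c.
have [_ sub_y] := hC _ (realization_supp cC).
move/negP: uC; apply; rewrite inE sub_y ?finset.sub1set //.
by apply/set0Pn; exists u; rewrite inE.
Qed.

Lemma vertex_in_component (C : {set {set 'I_n}}) x u :
    subcomplex C K -> realization K x -> u \in supp x -> u \notin verts C ->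
  connected_component (@sphere2 R `\` img f C) (f x) (f (vtx R u)).
Proof.
move=> CK xK ux uC; have [fc _ fS] := hf.
pose g t := x + t *: (vtx R u - x).
have g_in t : `[0, 1] t -> realization K (g t) /\ u \in supp (g t).
  by rewrite /= in_itv => t01; apply: vertex_segment.
have g_cont : continuous g.
  move=> t; rewrite /g.
  apply: (@continuousD _ _ _ (fun=> x) (fun t : R => t *: (vtx R u - x))).
    exact: cst_continuous.
  by apply: continuousZr_tmp => ?; apply: cvg_id.
pose A := f @` (g @` `[0, 1]).
have Ac : connected A.
  apply: connected_continuous_connected; last first.
    have gK : g @` `[0, 1] `<=` realization K by move=> _ [t /g_in[gK _] <-].
    exact: continuous_subspaceW gK fc.
  apply: connected_continuous_connected; first exact: segment_connected.
  exact: continuous_subspaceT.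
have AS : A `<=` @sphere2 R `\` img f C.
  move=> _ [_ [t t01 <-] <-]; have [gK ug] := g_in t t01.
  by split; [apply: fS; exists (g t) | apply: img_supp_notin ug uC].
have A_g t : `[0, 1] t -> A (f (g t)) by move=> t01; exists (g t) => //; exists t.
have A0 : A (f x).
  have -> : x = g 0 by rewrite /g scale0r addr0.
  by apply: A_g; rewrite /= in_itv /= lexx ler01.
have A1 : A (f (vtx R u)).
  have -> : vtx R u = g 1 by rewrite /g scale1r addrC subrK.
  by apply: A_g; rewrite /= in_itv /= lexx ler01.
exact: connected_component_max A0 AS Ac _ A1.
Qed.

Lemma component_misses_far_side (C D : {set {set 'I_n}}) U1 U2 (V2 : {set 'I_n})
    p x :
    full C K -> C \subset D ->
    region (img f C) U1 -> region (img f C) U2 -> U1 <> U2 -> U1 p ->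
    (forall v, v \in V2 -> U2 (f (vtx R v))) ->
    realization K x -> supp x \subset verts C :|: V2 -> supp x \notin D ->
  ~ connected_component (@sphere2 R `\` img f D) p (f x).
Proof.
move=> [CK fullC] CD rU1 rU2 U12 U1p V2U2 xK xCV2 xD px.
have U1x : U1 (f x).
  rewrite (regionE rU1 U1p); apply: connected_componentS px.
  by move=> y [Sy nDy]; split=> // /(imgS CD).
have [u ux uC] : exists2 u, u \in supp x & u \notin verts C.
  apply/exists_inP; apply: contraNT xD => /exists_inPn xC.
  apply: (fintype.subsetP CD); apply: fullC; first exact: realization_supp.
  by apply/fintype.subsetP => i /xC; rewrite negbK.
have uV2 : u \in V2.
  by move: (fintype.subsetP xCV2 _ ux); rewrite finset.in_setU (negbTE uC).
apply: U12; rewrite (regionE rU1 U1x) (regionE rU2 (V2U2 _ uV2)).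
exact/same_connected_component/vertex_in_component.
Qed.

End Embedding.

Section Trees.
Variables (VT ET : finType) (ends : ET -> VT * VT).

Lemma endpoints_ends e : endpoints ends e (ends e).1 (ends e).2.
Proof. by rewrite /endpoints -surjective_pairing eqxx. Qed.

Lemma endpoints_sym e u w : endpoints ends e u w = endpoints ends e w u.
Proof. exact: orbC. Qed.

Lemma endpoints_orient e a b v u :
  endpoints ends e a b -> endpoints ends e v u -> b != v -> a = v /\ b = u.
Proof.
rewrite /endpoints; case: (ends e) => c d.
by rewrite !xpair_eqE => /orP[]/andP[/eqP<- /eqP<-] /orP[]/andP[/eqP<- /eqP<-];
  rewrite ?eqxx.
Qed.

Lemma path_avoiding_edge e v u w p :
  endpoints ends e v u -> v \notin w :: p ->
  path (tadj ends) w p -> path (tadj_without ends e) w p.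
Proof.
move=> evu; elim: p w => //= y p IHp w.
rewrite inE negb_or => /andP[vw vyp] /andP[/existsP[e' e'wy] yp].
rewrite IHp // andbT; apply/existsP; exists e'; rewrite e'wy andbT.
apply: contra_neq vw => e'e; rewrite e'e in e'wy.
by have [] := endpoints_orient e'wy evu (memPn vyp y (mem_head _ _)).
Qed.

Lemma connect_edge_towards v w : connect (tadj ends) v w -> v != w ->
  exists e u, endpoints ends e v u /\ w \in side ends e u.
Proof.
case/connectP => p0 /shortenP[[|u p] /=]; first by move=> _ _ _ ->; rewrite eqxx.
move=> /andP[/existsP[e evu] up] /andP[v_notin_up _] _ -> _.
exists e, u; split=> //; rewrite inE; apply/connectP; exists p => //.
exact: path_avoiding_edge evu v_notin_up up.
Qed.

Lemma exists_notin_codom (g : ET -> VT) :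
  (#|ET| < #|VT|)%N -> exists v, v \notin codom g.
Proof.
move=> ltEV; apply/existsP; apply: contraTT ltEV => /existsPn codom_g.
rewrite -leqNgt -(size_codom g); apply: leq_trans (card_size _).
by apply: subset_leq_card; apply/fintype.subsetP => v _; move/negPn: (codom_g v).
Qed.

End Trees.

Section TreeOfSubcomplexes.
Local Open Scope ring_scope.
Local Open Scope classical_set_scope.
Variables (R : realType) (n : nat) (K : {set {set 'I_n}}).
Variable f : 'rV[R]_n -> 'rV[R]_3.
Variables (VT ET : finType) (ends : ET -> VT * VT).
Variables (Dv : VT -> {set {set 'I_n}}) (De : ET -> {set {set 'I_n}}).
Hypotheses (hK : simplicial_complex K) (hf : embedding f K).
Hypothesis DvK : forall v, Dv v \subset K.
Hypothesis De_full : forall e, full (De e) K.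
Hypothesis De_sub : forall e v u, endpoints ends e v u -> De e \subset Dv v.
Hypothesis decomposition : forall e, strong_visual_decomposition f K (De e)
  (\bigcup_(v in side ends e (ends e).1) Dv v)%SET
  (\bigcup_(v in side ends e (ends e).2) Dv v)%SET.
Variable p : 'rV[R]_3.
Hypothesis p_out : (@sphere2 R `\` img f K) p.

Definition hidden_beyond e v u : Prop :=
  forall w x, w \in side ends e u -> realization K x ->
    supp x \in Dv w -> supp x \notin Dv v ->
  ~ connected_component (@sphere2 R `\` img f (Dv v)) p (f x).

Lemma hidden_beyond_region e v u U1 U2 : endpoints ends e v u ->
    region (img f (De e)) U1 -> region (img f (De e)) U2 -> U1 <> U2 -> U1 p ->
    (\bigcup_(w in side ends e u) Dv w)%SET =
      full_sub K
        (verts (De e) :|: [set y in verts K | `[< U2 (f (vtx R y)) >]]%SET) ->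
  hidden_beyond e v u.
Proof.
move=> evu rU1 rU2 U12 U1p sideE w x wu xK xw xv.
have xV : supp x \subset
    verts (De e) :|: [set y in verts K | `[< U2 (f (vtx R y)) >]]%SET.
  have : supp x \in (\bigcup_(w in side ends e u) Dv w)%SET.
    by apply/bigcupP; exists w.
  by rewrite sideE inE => /andP[].
apply: (component_misses_far_side hK hf (De_full e) (De_sub evu) rU1 rU2 U12 U1p
  _ xK xV xv).
by move=> y; rewrite inE => /andP[_ /asboolP].
Qed.

Lemma exists_hidden_beyond e :
  exists vu : VT * VT, endpoints ends e vu.1 vu.2 /\ hidden_beyond e vu.1 vu.2.
Proof.
have [_ [U1 [U2 [[rU1 rU2 U12 cover] [_ _ side1E side2E]]]]] := decomposition e.
have [[_ DeK] _] := De_full e.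
have : (@sphere2 R `\` img f (De e)) p.
  by case: p_out => Sp pK; split=> // /(imgS DeK).
case/cover => [U1p|U2p].
  exists ((ends e).1, (ends e).2); split; first exact: endpoints_ends.
  exact: hidden_beyond_region (endpoints_ends _ _) rU1 rU2 U12 U1p side2E.
exists ((ends e).2, (ends e).1); split; first by rewrite endpoints_sym endpoints_ends.
apply: hidden_beyond_region rU2 rU1 (nesym U12) U2p side1E.
by rewrite endpoints_sym endpoints_ends.
Qed.

Lemma region_of_unhidden_vertex :
  is_tree ends -> (\bigcup_(v : VT) Dv v)%SET = K ->
  exists v, region (img f (Dv v)) (connected_component (@sphere2 R `\` img f K) p).
Proof.
move=> [card_ET tree_connected] DvU.
have [orient orientP] := choice exists_hidden_beyond.
have [v v_out] := exists_notin_codom (fun e => (orient e).2) (eq_leq card_ET).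
have v_tail e : (orient e).2 != v by apply: contraNneq v_out => <-; apply: codom_f.
have outK : @sphere2 R `\` img f K `<=` @sphere2 R `\` img f (Dv v).
  by move=> y [Sy yK]; split=> // /(imgS (DvK v)).
exists v; exists p; first exact: outK.
apply/esym/(connected_component_subE outK) => y pfx.
have [Sy yv] := connected_component_sub pfx; split=> // -[x xK fx_eq].
rewrite -fx_eq in pfx yv.
have [xv|xv] := boolP (supp x \in Dv v).
  by apply: yv; exists x => //; case: xK => x0 [x1 _].
have /bigcupP[w _ xw] : supp x \in (\bigcup_(w : VT) Dv w)%SET.
  by rewrite DvU realization_supp.
have [e [u [evu wu]]] : exists e u, endpoints ends e v u /\ w \in side ends e u.
  by apply: connect_edge_towards => //; apply: contraNneq xv => ->.
have [orient_e hidden] := orientP e.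
have [ev eu] := endpoints_orient orient_e evu (v_tail e).
by rewrite ev eu in hidden; apply: hidden wu xK xw xv pfx.
Qed.

End TreeOfSubcomplexes.

Theorem lemma4p15 (R : realType) (n : nat) (K : {set {set 'I_n}})
    (f : 'rV[R]_n -> 'rV[R]_3) (VT ET : finType) (ends : ET -> VT * VT)
    (Dv : VT -> {set {set 'I_n}}) (De : ET -> {set {set 'I_n}}) :
  simplicial_complex K -> flag K -> embedding f K ->
  standing_assumptions K ->
  is_tree ends ->
  (forall v, full (Dv v) K /\ prime_complex f (Dv v)) ->
  injective Dv ->
  \bigcup_(v : VT) Dv v = K ->
  (forall e, induced_4cycle K (De e)) ->
  injective De ->
  (forall e v1 v2, endpoints ends e v1 v2 <-> Dv v1 :&: Dv v2 = De e) ->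
  (forall e, strong_visual_decomposition f K (De e)
               (\bigcup_(v in side ends e (ends e).1) Dv v)
               (\bigcup_(v in side ends e (ends e).2) Dv v)) ->
  forall U : set 'rV[R]_3, region (img f K) U ->
  exists v : VT, region (img f (Dv v)) U.
Proof.
move=> hK _ hf _ tree hDv _ DvU hDe _ hDvDe decomposition U [p p_out ->].
have DvK v : Dv v \subset K by have [[[_ ?] _] _] := hDv v.
have De_sub e v u : endpoints ends e v u -> De e \subset Dv v.
  by move/hDvDe <-; apply: subsetIl.
have De_full e : full (De e) K by apply: induced_4cycle_full.
exact: (region_of_unhidden_vertex hK hf DvK De_full De_sub decomposition p_out
  tree DvU).
Qed.
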